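(* Let $n\ge2$ and $\mathbf{q}\in(\Bbbk^\times)^n$; indices are modulo $n$. (1) Let $\alpha_0,\dots,\alpha_{n-1}\in\Bbbk^\times$ and set $p_i=\frac{\alpha_{i+1}}{\alpha_i}q_i$ for $0\le i<n$. The linear map $\phi_\alpha:B_n(\mathbf{q})\to B_n(\mathbf{p})$ with $\phi_\alpha(e_i)=e_i$, $\phi_\alpha(a_i)=a_i$, $\phi_\alpha(b_i)=\alpha_ib_i$ extends to an isomorphism. (2) Set $p_i=q_{i-1}$ for $0\le i<n$. The linear map $\psi:B_n(\mathbf{q})\to B_n(\mathbf{p})$ with $\psi(e_i)=e_{i+1}$, $\psi(a_i)=a_{i+1}$, $\psi(b_i)=b_{i+1}$ extends to an isomorphism.
   Context: $\Bbbk$ is an algebraically closed field of characteristic zero. Paths are written left to right. $B_n(\mathbf{q})=\Bbbk Q/(b_ia_i-q_ia_ib_{i+1},\ i=0,\dots,n-1)$, where $Q$ has vertices $e_0,\dots,e_{n-1}$, arrows $a_i:e_i\to e_{i+1}$ and loops $b_i$ at $e_i$, indices modulo $n$. *)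

From HB Require Import structures.
From mathcomp Require Import all_boot all_order all_algebra.
Set Implicit Arguments. Unset Strict Implicit. Unset Printing Implicit Defensive.
Import GRing.Theory.
Local Open Scope ring_scope.

(* Indices modulo n are elements of 'I_n; i+1 is [ordS i], i-1 is [ord_pred i].
   Paths are written left to right, so the product x * y in the algebra is
   "x followed by y". *)

Definition alg_hom (k : fieldType) (A B : algType k) (f : A -> B) : Prop :=
  linear f /\ monoid_morphism f.

Definition Bn_rels (k : fieldType) (n : nat) (q : 'I_n -> k) (B : algType k)
    (e a b : 'I_n -> B) : Prop :=
  [/\ forall i j : 'I_n, e i * e j = (if i == j then e i else 0),
      \sum_(i < n) e i = 1,
      forall i : 'I_n, e i * a i * e (ordS i) = a i,
      forall i : 'I_n, e i * b i * e i = b i &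
      forall i : 'I_n, b i * a i = q i *: (a i * b (ordS i))].

(* (A, e, a, b) is (a model of) the algebra B_n(q): the quotient of the path
   algebra kQ by the ideal generated by b_i a_i - q_i a_i b_{i+1}.  It is
   characterised by its universal property (kQ is the free algebra on the
   quiver Q, and the quotient by the relations is the initial algebra
   generated by such data). *)
Definition is_Bn (k : fieldType) (n : nat) (q : 'I_n -> k) (A : algType k)
    (e a b : 'I_n -> A) : Prop :=
  Bn_rels q e a b /\
  forall (B : algType k) (E X Y : 'I_n -> B), Bn_rels q E X Y ->
    (exists f : A -> B, alg_hom f /\
       forall i, [/\ f (e i) = E i, f (a i) = X i & f (b i) = Y i]) /\
    (forall f g : A -> B, alg_hom f -> alg_hom g ->
       (forall i, [/\ f (e i) = g (e i), f (a i) = g (a i) & f (b i) = g (b i)]) ->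
       f =1 g).

Definition alg_iso (k : fieldType) (A B : algType k) (f : A -> B) : Prop :=
  alg_hom f /\ bijective f.

From HB Require Import structures.
From mathcomp Require Import all_boot all_order all_algebra.
From mathcomp Require Import ring.
Set Implicit Arguments. Unset Strict Implicit. Unset Printing Implicit Defensive.
Import GRing.Theory.
Local Open Scope ring_scope.

(* Both maps are produced by the universal property of B_n: one checks that
   the proposed images of the generators satisfy the relations of the source,
   and that the proposed inverse images satisfy those of the target.  By the
   uniqueness half of the universal property, both composites are the
   identity, since they fix the generators. *)

Section AlgHom.

Variables (k : fieldType) (A B C : algType k).

Lemma alg_hom_id : alg_hom (@id A).
Proof. by split; [move=> x u v | split]. Qed.

Lemma alg_hom_comp (f : A -> B) (g : B -> C) :
  alg_hom f -> alg_hom g -> alg_hom (g \o f).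
Proof.
move=> [lf [f1 fM]] [lg [g1 gM]]; split.
  by move=> c u v /=; rewrite lf lg.
by split => [|x y] /=; rewrite ?f1 ?g1 ?fM ?gM.
Qed.

Lemma alg_homZ (f : A -> B) (c : k) (x : A) :
  alg_hom f -> f (c *: x) = c *: f x.
Proof.
case=> lf _; have := lf 1 0 0; rewrite !scale1r addr0 => f00.
have f0 : f 0 = 0 by apply: (@addrI _ (f 0)); rewrite addr0 -f00.
by have := lf c x 0; rewrite !addr0 f0 addr0.
Qed.

End AlgHom.

Section Bn.

Variables (k : fieldType) (n : nat).
Implicit Types (p q : 'I_n -> k).

Lemma Bn_rels_scale_loops p q (alpha : 'I_n -> k) (B : algType k)
    (e a b : 'I_n -> B) :
  (forall i, alpha i * p i = q i * alpha (ordS i)) ->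
  Bn_rels p e a b -> Bn_rels q e a (fun i => alpha i *: b i).
Proof.
move=> hpq [eM e1 ea eb ba]; split=> // i.
  by rewrite -scalerAr -scalerAl eb.
by rewrite -scalerAl ba -scalerAr !scalerA hpq.
Qed.

Lemma Bn_rels_relabel p q (s : 'I_n -> 'I_n) (B : algType k)
    (e a b : 'I_n -> B) :
  injective s -> (forall i, s (ordS i) = ordS (s i)) ->
  (forall i, q i = p (s i)) ->
  Bn_rels p e a b -> Bn_rels q (e \o s) (a \o s) (b \o s).
Proof.
move=> s_inj sS hqp [eM e1 ea eb ba]; split=> [i j|||i|i] /=.
- by rewrite eM (inj_eq s_inj).
- by rewrite -e1 [RHS](reindex_inj s_inj).
- by move=> i /=; rewrite sS.
- exact: eb.
- by rewrite sS ba hqp.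
Qed.

Lemma is_Bn_hom_id q (A : algType k) (e a b : 'I_n -> A) (h : A -> A) :
  is_Bn q e a b -> alg_hom h ->
  (forall i, [/\ h (e i) = e i, h (a i) = a i & h (b i) = b i]) ->
  h =1 id.
Proof.
move=> [rels univ] hh fix_h; exact: (univ _ _ _ _ rels).2 h id hh (@alg_hom_id _ A) fix_h.
Qed.

Lemma is_Bn_alg_iso p q (A : algType k) (e a b : 'I_n -> A)
    (A' : algType k) (e' a' b' : 'I_n -> A') (f : A -> A') (g : A' -> A) :
  is_Bn q e a b -> is_Bn p e' a' b' -> alg_hom f -> alg_hom g ->
  (forall i, [/\ g (f (e i)) = e i, g (f (a i)) = a i & g (f (b i)) = b i]) ->
  (forall i, [/\ f (g (e' i)) = e' i, f (g (a' i)) = a' i & f (g (b' i)) = b' i]) ->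
  alg_iso f.
Proof.
move=> HA HA' hf hg gf fg; split=> //; exists g.
  exact: is_Bn_hom_id HA (alg_hom_comp hf hg) gf.
exact: is_Bn_hom_id HA' (alg_hom_comp hg hf) fg.
Qed.

Lemma Bn_scale_loops_iso q (alpha : 'I_n -> k) p :
  (forall i, alpha i != 0) -> (forall i, p i = alpha (ordS i) / alpha i * q i) ->
  forall (A : algType k) (e a b : 'I_n -> A) (A' : algType k) (e' a' b' : 'I_n -> A'),
    is_Bn q e a b -> is_Bn p e' a' b' ->
    exists phi : A -> A', alg_iso phi /\
      forall i, [/\ phi (e i) = e' i, phi (a i) = a' i & phi (b i) = alpha i *: b' i].
Proof.
move=> alpha_nz hp A e a b A' e' a' b' HA HA'.
have rels' : Bn_rels q e' a' (fun i => alpha i *: b' i).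
  apply: Bn_rels_scale_loops HA'.1 => i.
  by rewrite hp; field; rewrite alpha_nz.
have rels : Bn_rels p e a (fun i => (alpha i)^-1 *: b i).
  apply: Bn_rels_scale_loops HA.1 => i.
  by rewrite hp; field; rewrite !alpha_nz.
have [[f [hf fE]] _] := HA.2 _ _ _ _ rels'.
have [[g [hg gE]] _] := HA'.2 _ _ _ _ rels.
exists f; split=> //; apply: (is_Bn_alg_iso HA HA' hf hg) => i.
  case: (fE i) (gE i) => -> -> -> [-> -> gb]; split=> //.
  by rewrite alg_homZ // gb scalerA mulfV ?scale1r.
case: (gE i) (fE i) => -> -> -> [-> -> fb]; split=> //.
by rewrite alg_homZ // fb scalerA mulVf ?scale1r.
Qed.

Lemma Bn_rotate_iso q p :
  (forall i, p i = q (ord_pred i)) ->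
  forall (A : algType k) (e a b : 'I_n -> A) (A' : algType k) (e' a' b' : 'I_n -> A'),
    is_Bn q e a b -> is_Bn p e' a' b' ->
    exists psi : A -> A', alg_iso psi /\
      forall i, [/\ psi (e i) = e' (ordS i), psi (a i) = a' (ordS i)
                  & psi (b i) = b' (ordS i)].
Proof.
move=> hp A e a b A' e' a' b' HA HA'.
have q_ordS (i : 'I_n) : q i = p (ordS i) by rewrite hp ordSK.
have rels' := Bn_rels_relabel (@ordS_inj n) (fun=> erefl) q_ordS HA'.1.
have pred_ordS (i : 'I_n) : ord_pred (ordS i) = ordS (ord_pred i).
  by rewrite ordSK ord_predK.
have rels := Bn_rels_relabel (@ord_pred_inj n) pred_ordS hp HA.1.
have [[f [hf fE]] _] := HA.2 _ _ _ _ rels'.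
have [[g [hg gE]] _] := HA'.2 _ _ _ _ rels.
exists f; split=> //; apply: (is_Bn_alg_iso HA HA' hf hg) => i.
  by case: (fE i) (gE (ordS i)) => -> -> -> /=; rewrite ordSK.
by case: (gE i) (fE (ord_pred i)) => -> -> -> /=; rewrite ord_predK.
Qed.

End Bn.

Theorem lemma2p9 (k : closedFieldType) (hchar : [pchar k] =i pred0)
  (n : nat) (hn : (2 <= n)%N) (q : 'I_n -> k) (hq : forall i, q i != 0) :
  (* (1) rescaling of the loops *)
  (forall (alpha : 'I_n -> k), (forall i, alpha i != 0) ->
   forall (p : 'I_n -> k), (forall i, p i = alpha (ordS i) / alpha i * q i) ->
   forall (A : algType k) (e a b : 'I_n -> A) (A' : algType k) (e' a' b' : 'I_n -> A'),
     is_Bn q e a b -> is_Bn p e' a' b' ->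
     exists phi : A -> A', alg_iso phi /\
       forall i, [/\ phi (e i) = e' i, phi (a i) = a' i & phi (b i) = alpha i *: b' i]) /\
  (* (2) rotation of the quiver *)
  (forall (p : 'I_n -> k), (forall i, p i = q (ord_pred i)) ->
   forall (A : algType k) (e a b : 'I_n -> A) (A' : algType k) (e' a' b' : 'I_n -> A'),
     is_Bn q e a b -> is_Bn p e' a' b' ->
     exists psi : A -> A', alg_iso psi /\
       forall i, [/\ psi (e i) = e' (ordS i), psi (a i) = a' (ordS i)
                   & psi (b i) = b' (ordS i)]).
Proof.
split=> [alpha alpha_nz p hp|p hp].
- exact: Bn_scale_loops_iso.
- exact: Bn_rotate_iso.
Qed.
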